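(* Let $k\geq 1$ be an integer. (i) Let $r=2k+1$ and let $1\leq i_1<i_2<\cdots<i_r$ be integers. Then \[ \int_{[0,1]^{i_r}}\frac{dx_1\cdots dx_{i_r}}{1-x_1\cdots x_{i_1}+x_1\cdots x_{i_2}-\cdots+(-1)^r x_1\cdots x_{i_r}} =\zeta^{\star}\big(i_1+1,\{1\}^{i_2-i_1-1},\,i_3-i_2+1,\{1\}^{i_4-i_3-1},\,\ldots,\,i_{2k-1}-i_{2k-2}+1,\{1\}^{i_{2k}-i_{2k-1}-1},\,i_{2k+1}-i_{2k}\big). \] (ii) Let $r=2k$ and let $1\leq i_1<i_2<\cdots<i_r$ be integers. Then \[ \int_{[0,1]^{i_r}}\frac{dx_1\cdots dx_{i_r}}{1-x_1\cdots x_{i_1}+x_1\cdots x_{i_2}-\cdots+(-1)^r x_1\cdots x_{i_r}} =\zeta^{\star}\big(i_1+1,\{1\}^{i_2-i_1-1},\,i_3-i_2+1,\{1\}^{i_4-i_3-1},\,\ldots,\,i_{2k-1}-i_{2k-2}+1,\{1\}^{i_{2k}-i_{2k-1}-1}\big). \] Here the denominator is $1+\sum_{j=1}^{r}(-1)^j\prod_{m=1}^{i_j}x_m$.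
   Context: For integers $k_1\geq 2$ and $k_2,\ldots,k_r\geq 1$, the multiple zeta-star value is $\zeta^{\star}(k_1,\ldots,k_r)=\sum_{n_1\geq n_2\geq\cdots\geq n_r\geq 1}\frac{1}{n_1^{k_1}\cdots n_r^{k_r}}$. The notation $\{1\}^{l}$ denotes $l$ consecutive arguments equal to $1$ (nothing if $l=0$). In the argument lists, the pattern ''$i_{2j-1}-i_{2j-2}+1,\{1\}^{i_{2j}-i_{2j-1}-1}$'' is repeated for $j=2,\ldots,k$ after the initial block $i_1+1,\{1\}^{i_2-i_1-1}$ (so e.g. for $k=1$ in (i) the list is $(i_1+1,\{1\}^{i_2-i_1-1},i_3-i_2)$). *)

From HB Require Import structures.
From mathcomp Require Import all_boot all_order all_algebra.
From mathcomp Require Import all_classical all_reals all_analysis.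
Set Implicit Arguments. Unset Strict Implicit. Unset Printing Implicit Defensive.
Import Order.TTheory GRing.Theory Num.Theory.
Local Open Scope classical_set_scope.
Local Open Scope ring_scope.

Definition zs_index (r : nat) : set (seq nat) :=
  [set n | size n = r /\ sorted geq n /\ all (fun m => 0 < m)%N n].

Definition zeta_star {R : realType} (ks : seq nat) : \bar R :=
  \esum_(n in zs_index (size ks))
     ((\prod_(j < size ks) ((nth 0%N n j)%:R ^+ (nth 0%N ks j))^-1 : R)%:E).

(* Iterated Lebesgue integral over the unit cube [0,1]^n; the point
   (x_1,...,x_n) is passed to f as the sequence [:: x_1; ...; x_n]
   (x_1 integrated outermost). *)
Fixpoint cube_int {R : realType} (n : nat) (f : seq R -> \bar R) : \bar R :=
  match n with
  | 0 => f [::]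
  | n'.+1 => (\int[@lebesgue_measure R]_(x in `[0%R, 1%R])
                 cube_int n' (fun s => f (x :: s)))%E
  end.

(* Denominator 1 + sum_{j=1}^r (-1)^j x_1 ... x_{i_j}; x_m = nth 0 x (m-1). *)
Definition denom {R : realType} (i : nat -> nat) (r : nat) (x : seq R) : R :=
  1 + \sum_(1 <= j < r.+1) (-1) ^+ j * \prod_(m < i j) nth 0 x m.

(* The blocks  i_{2j-1}-i_{2j-2}+1, {1}^{i_{2j}-i_{2j-1}-1}  for j = 1..k,
   with the convention i_0 = 0 (so the first block is i_1+1, {1}^{i_2-i_1-1}). *)
Definition zblocks (i : nat -> nat) (k : nat) : seq nat :=
  flatten [seq ((i (2 * j - 1) - (if j == 1 then 0 else i (2 * j - 2))).+1
                 :: nseq (i (2 * j) - i (2 * j - 1) - 1) 1)%N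
          | j <- iota 1 k].

From HB Require Import structures.
From mathcomp Require Import all_boot all_order all_algebra.
From mathcomp Require Import all_classical all_reals all_analysis.
From mathcomp Require Import measurable_realfun.
From mathcomp Require Import zify.

(* The denominator is 1 - E(x) for the nested product
     E = x_1...x_(l_1) (1 - x_(l_1+1)...x_(l_1+l_2) (1 - ...)),  l_j = i_j - i_(j-1),
   which lies in [0, 1) off the null set x_1 = 1, so the integral is the sum
   over n of the moments mu_n = int E^n.  Integrating out one variable at a
   time, a factor x_m divides mu_n by n + 1, while
     int_0^1 (1 - x y)^n dx = (n+1)^-1 sum_(m <= n) (1 - y)^m
   turns the moments nu_n = int (1 - E)^n into averaged partial sums.  Following
   these recursions through the blocks, sum_(n < N) mu_n is the zeta-star sum
   truncated at n_1 <= N, with exactly the argument string of the theorem;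
   letting N go to infinity gives zeta-star. *)

Set Implicit Arguments. Unset Strict Implicit. Unset Printing Implicit Defensive.
Import Order.TTheory GRing.Theory Num.Theory numFieldNormedType.Exports.
Local Open Scope classical_set_scope.
Local Open Scope ring_scope.

Lemma poly_eq_deriv (R : numDomainType) (F G : {poly R}) :
  F^`() = G^`() -> F`_0 = G`_0 -> F = G.
Proof.
move=> dFG FG0; apply/polyP => -[|j] //.
by move/(congr1 (coefp j)): dFG; rewrite /= !coef_deriv => /pmulrnI->.
Qed.

Lemma eq_from_partial_sums (V : zmodType) (a b : nat -> V) :
  (forall N, \sum_(m < N.+1) a m = \sum_(m < N.+1) b m) -> a =1 b.
Proof.
move=> ab [|n]; first by have := ab 0%N; rewrite !big_ord1.
by have := ab n.+1; rewrite big_ord_recr [in RHS]big_ord_recr /= (ab n) => /addrI.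
Qed.

Section PolyAverage.
Variable R : numFieldType.

(* [(poly_avg p).[y] = int_0^1 p.[x * y] dx]. *)
Definition poly_avg (p : {poly R}) : {poly R} :=
  \poly_(j < size p) (p`_j / j.+1%:R).

Lemma deriv_X_poly_avg (p : {poly R}) : ('X * poly_avg p)^`() = p.
Proof.
apply/polyP => j; rewrite coef_deriv coefXM coef_poly /=.
case: ltnP => [_|le_p_j]; last by rewrite mul0rn nth_default.
by rewrite -[X in X = _]mulr_natr mulfVK // pnatr_eq0.
Qed.

Lemma horner_X_poly_avg1 (p : {poly R}) n : (size p <= n)%N ->
  ('X * poly_avg p).[1] = \sum_(j < n) p`_j / j.+1%:R.
Proof.
move=> le_p_n; rewrite mulrC hornerMX mulr1.
rewrite (horner_coef_wide _ (leq_trans (size_poly _ _) le_p_n)).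
apply: eq_bigr => j _; rewrite expr1n mulr1 coef_poly.
by case: ltnP => // le_p_j; rewrite nth_default ?mul0r.
Qed.

Lemma poly_avg_1subX_pow n :
  poly_avg ((1 - 'X) ^+ n) = n.+1%:R^-1 *: \sum_(m < n.+1) (1 - 'X) ^+ m.
Proof.
apply: (@mulfI _ 'X); first by rewrite polyX_eq0.
have geo : 'X * \sum_(m < n.+1) (1 - 'X) ^+ m = 1 - (1 - 'X) ^+ n.+1 :> {poly R}.
  have := subrX1 (1 - 'X : {poly R}) n.+1.
  rewrite addrAC subrr sub0r mulNr => /(congr1 -%R).
  by rewrite opprB opprK => <-.
rewrite -scalerAr geo; apply: poly_eq_deriv.
  rewrite deriv_X_poly_avg derivZ derivB deriv_exp derivB -!polyC1 !derivC derivX.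
  rewrite !sub0r mulN1r mulNrn opprK -scalerMnr scalerMnl -mulr_natr.
  by rewrite mulVf ?scale1r ?pnatr_eq0.
rewrite coefZ coefB coefXM coefC -horner_coef0 !hornerE /=.
by rewrite subr0 expr1n subrr mulr0.
Qed.

End PolyAverage.

Lemma integral01_poly (R : realType) (q : {poly R}) n : (size q <= n)%N ->
  (\int[@lebesgue_measure R]_(x in `[0%R, 1%R]) (q.[x])%:E =
   (\sum_(j < n) q`_j / j.+1%:R)%:E)%E.
Proof.
move=> le_q_n.
rewrite (@continuous_FTC2 _ _ (horner ('X * poly_avg q))) //.
- by rewrite (horner_X_poly_avg1 le_q_n) mulrC hornerMX mulr0 sube0.
- by apply/continuous_subspaceT => x; exact: continuous_horner.
- split.
  + by move=> x _; exact: derivable_horner.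
  + by apply: cvg_at_right_filter; exact: continuous_horner.
  + by apply: cvg_at_left_filter; exact: continuous_horner.
- by move=> x _; rewrite -derivE deriv_X_poly_avg.
Qed.

Section MomentFunctional.
Variable R : comNzRingType.
Implicit Types (m : nat -> R) (p q : {poly R}).

Definition momf m p : R := \sum_(j < size p) p`_j * m j.

Lemma momf_wide m p n : (size p <= n)%N -> momf m p = \sum_(j < n) p`_j * m j.
Proof.
move=> le_p_n; rewrite /momf (big_ord_widen n (fun j => p`_j * m j) le_p_n).
rewrite big_mkcond /=; apply: eq_bigr => j _.
by case: ltnP => // le_p_j; rewrite nth_default ?mul0r.
Qed.

Lemma momf0 m : momf m 0 = 0.
Proof. by rewrite /momf size_poly0 big_ord0. Qed.

Lemma momfD m p q : momf m (p + q) = momf m p + momf m q.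
Proof.
set n := maxn (size p) (size q).
rewrite (@momf_wide _ _ n) ?(leq_trans (size_polyD _ _)) //.
rewrite (@momf_wide _ p n) ?leq_maxl // (@momf_wide _ q n) ?leq_maxr //.
by rewrite -big_split; apply: eq_bigr => j _; rewrite coefD mulrDl.
Qed.

Lemma momfZ m c p : momf m (c *: p) = c * momf m p.
Proof.
rewrite (@momf_wide _ _ (size p)) ?size_scale_leq // /momf mulr_sumr.
by apply: eq_bigr => j _; rewrite coefZ mulrA.
Qed.

Lemma momf_sum m (I : Type) (r : seq I) (P : pred I) (F : I -> {poly R}) :
  momf m (\sum_(i <- r | P i) F i) = \sum_(i <- r | P i) momf m (F i).
Proof. exact: (big_morph _ (momfD m) (momf0 m)). Qed.

Lemma momfXn m k : momf m 'X^k = m k.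
Proof.
rewrite (@momf_wide _ _ k.+1) ?size_polyXn // big_ord_recr /= big1 => [|j _].
  by rewrite coefXn eqxx mul1r add0r.
by rewrite coefXn ltn_eqF ?mul0r //; exact: ltn_ord.
Qed.

Lemma momf_comp m p q : momf m (p \Po q) = momf (fun k => momf m (q ^+ k)) p.
Proof. by rewrite comp_polyE momf_sum; apply: eq_bigr => j _; rewrite momfZ. Qed.

Lemma momf_comp_scale m p q x :
  momf m (p \Po (x *: q)) = (\poly_(k < size p) (p`_k * momf m (q ^+ k))).[x].
Proof.
rewrite momf_comp (horner_coef_wide _ (size_poly _ _)); apply: eq_bigr => k _.
by rewrite coef_poly ltn_ord exprZn momfZ mulrA mulrAC.
Qed.

End MomentFunctional.

Lemma integral01_momf_comp_scale (R : realType) (m : nat -> R) (p q : {poly R}) :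
  (\int[@lebesgue_measure R]_(x in `[0%R, 1%R]) (momf m (p \Po (x *: q)))%:E)%E =
  (momf (fun k => momf m (q ^+ k) / k.+1%:R) p)%:E.
Proof.
under eq_integral do rewrite momf_comp_scale.
rewrite (integral01_poly (size_poly _ _)) /momf; congr EFin.
by apply: eq_bigr => k _; rewrite coef_poly ltn_ord mulrA.
Qed.

Section NestedProducts.
Variable R : realType.

(* Clamping makes [nested bs s] lie in [0, 1] for every [s], not only on the
   unit cube, so no integrand below needs a domain side condition. *)
Definition clamp01 (x : R) : R := Num.min 1 (Num.max 0 x).

Lemma clamp01_id x : 0 <= x <= 1 -> clamp01 x = x.
Proof. by case/andP => x0 x1; rewrite /clamp01 (max_idPr x0) (min_idPr x1). Qed.

Lemma clamp01_ge0 x : 0 <= clamp01 x.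
Proof. by rewrite /clamp01 le_min ler01 le_max lexx. Qed.

Lemma clamp01_le1 x : clamp01 x <= 1.
Proof. by rewrite /clamp01 ge_min lexx. Qed.

Lemma measurable_clamp01 : measurable_fun setT clamp01.
Proof.
apply: measurable_minr; first exact: measurable_cst.
by apply: measurable_maxr; [exact: measurable_cst | exact: measurable_id].
Qed.

Definition flipX (b : bool) : {poly R} := if b then 1 - 'X else 'X.

Lemma flipX_01 b y : 0 <= y <= 1 -> 0 <= (flipX b).[y] <= 1.
Proof.
case/andP => y0 y1; case: b; rewrite /flipX !hornerE ?y0 ?y1 //.
by rewrite subr_ge0 y1 lerBlDr lerDl.
Qed.

Lemma clamp01_flipX_01 x b y : 0 <= y <= 1 ->
  0 <= clamp01 x * (flipX b).[y] <= 1.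
Proof.
move=> /(flipX_01 b)/andP[g0 g1].
by rewrite mulr_ge0 ?clamp01_ge0 // mulr_ile1 ?clamp01_ge0 ?clamp01_le1.
Qed.

Fixpoint nested (bs : seq bool) (s : seq R) : R :=
  if bs is b :: bs' then clamp01 (head 0 s) * (flipX b).[nested bs' (behead s)]
  else 0.

Lemma nested_01 bs s : 0 <= nested bs s <= 1.
Proof.
by elim: bs s => [|b bs IH] s /=; [rewrite lexx ler01 | exact: clamp01_flipX_01].
Qed.

(* [mom bs k] is the k-th moment of [nested bs] over the unit cube
   (cube_int_poly_nested). *)
Fixpoint mom (bs : seq bool) : nat -> R :=
  if bs is b :: bs' then fun k => momf (mom bs') (flipX b ^+ k) / k.+1%:R
  else fun k => (k == 0)%:R.

Lemma momf_mom_nil p : momf (mom [::]) p = p.[0].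
Proof.
rewrite (@momf_wide _ _ _ (size p).+1) // big_ord_recl big1 => [|j _].
  by rewrite mulr1 addr0 horner_coef0.
by rewrite mulr0.
Qed.

Lemma cube_int_poly_nested bs p :
  cube_int (size bs) (fun s => (p.[nested bs s])%:E) = (momf (mom bs) p)%:E.
Proof.
elim: bs p => [|b bs IH] p /=; first by rewrite momf_mom_nil.
rewrite -integral01_momf_comp_scale; apply: eq_integral => x /[!inE] x01.
under eq_fun do rewrite -hornerZ -horner_comp.
by rewrite IH clamp01_id.
Qed.

Lemma cube_int_ge0 n (f : seq R -> \bar R) :
  (forall s, (0 <= f s)%E) -> (0 <= cube_int n f)%E.
Proof.
elim: n f => [|n IH] f f0 /=; first exact: f0.
by apply: integral_ge0 => x _; apply: IH.
Qed.

Lemma eq_cube_int n (f g : seq R -> \bar R) :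
  (forall s, size s = n -> all (fun x => 0 <= x <= 1) s -> f s = g s) ->
  cube_int n f = cube_int n g.
Proof.
elim: n f g => [|n IH] f g fg /=; first exact: fg.
apply: eq_integral => x; rewrite inE /= in_itv /= => x01.
by apply: IH => s size_s s01; apply: fg; rewrite /= ?size_s ?x01.
Qed.

Lemma momf_mom_ge0 bs p : (forall y, 0 <= y <= 1 -> 0 <= p.[y]) ->
  0 <= momf (mom bs) p.
Proof.
move=> p0; rewrite -lee_fin -cube_int_poly_nested.
by apply: cube_int_ge0 => s; rewrite lee_fin p0 ?nested_01.
Qed.

Lemma comp_clamp01_flipX_ge0 p x b : (forall y, 0 <= y <= 1 -> 0 <= p.[y]) ->
  forall y, 0 <= y <= 1 -> 0 <= (p \Po (clamp01 x *: flipX b)).[y].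
Proof. by move=> p0 y y01; rewrite horner_comp hornerZ p0 ?clamp01_flipX_01. Qed.

Lemma measurable_momf_comp_clamp01 (m : nat -> R) p q (D : set R) :
  measurable_fun D (fun x => (momf m (p \Po (clamp01 x *: q)))%:E).
Proof.
apply: measurable_funTS; apply/measurable_EFinP.
have -> : (fun x => momf m (p \Po (clamp01 x *: q))) =
    horner (\poly_(k < size p) (p`_k * momf m (q ^+ k))) \o clamp01.
  by apply/funext => x; rewrite /= momf_comp_scale.
apply: measurableT_comp measurable_clamp01.
by apply: continuous_measurable_fun; exact: continuous_horner.
Qed.

Lemma cube_int_series_nested bs (p : nat -> {poly R}) :
  (forall n y, 0 <= y <= 1 -> 0 <= (p n).[y]) ->
  cube_int (size bs) (fun s => \sum_(n <oo) ((p n).[nested bs s])%:E)%E =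
  (\sum_(n <oo) (momf (mom bs) (p n))%:E)%E.
Proof.
elim: bs p => [|b bs IH] p p0 /=.
  by apply: eq_eseriesr => n _; rewrite momf_mom_nil.
transitivity (\int[@lebesgue_measure R]_(x in `[0%R, 1%R])
   (\sum_(n <oo) (momf (mom bs) (p n \Po (clamp01 x *: flipX b)))%:E))%E.
  apply: eq_integral => x _.
  under eq_fun do under eq_eseriesr do rewrite -hornerZ -horner_comp.
  by rewrite IH // => n; exact: comp_clamp01_flipX_ge0 (p0 n).
rewrite integral_nneseries //.
- apply: eq_eseriesr => n _; rewrite -integral01_momf_comp_scale.
  by apply: eq_integral => x /[!inE] x01; rewrite clamp01_id.
- by move=> n; apply: measurable_momf_comp_clamp01.
- move=> n x _; rewrite lee_fin; apply: momf_mom_ge0.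
  exact: comp_clamp01_flipX_ge0 (p0 n).
Qed.

Lemma eseries_geometric (y : R) : 0 <= y < 1 ->
  (\sum_(n <oo) (y ^+ n)%:E)%E = ((1 - y)^-1)%:E.
Proof.
move=> /andP[y0 y1].
have : series (geometric 1 y) @ \oo --> 1 * (1 - y)^-1.
  by apply: cvg_geometric_series; rewrite ger0_norm.
rewrite mul1r => geo; apply: cvg_lim => //; apply: cvg_EFin.
  by apply: nearW => n /=; rewrite sumEFin.
rewrite (_ : fine \o _ = series (geometric 1 y)) //.
apply/funext => n /=; rewrite sumEFin /= /series /=.
by apply: eq_bigr => i _; rewrite /geometric /= mul1r.
Qed.

Lemma cube_int_inv_1sub_nested b bs :
  cube_int (size bs).+1 (fun s => ((1 - nested (b :: bs) s)^-1)%:E) =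
  (\sum_(n <oo) (mom (b :: bs) n)%:E)%E.
Proof.
have Xn_ge0 n y : 0 <= y <= 1 -> 0 <= ('X^n : {poly R}).[y].
  by case/andP => y0 _; rewrite hornerXn exprn_ge0.
under [RHS]eq_eseriesr do rewrite -momfXn.
rewrite -(cube_int_series_nested (b :: bs) Xn_ge0) /=.
(* The integrands F and G of the outer integral differ only at x = 1. *)
set F := fun x => cube_int (size bs)
  (fun s => ((1 - clamp01 x * (flipX b).[nested bs s])^-1)%:E).
set G := fun x => cube_int (size bs)
  (fun s => (\sum_(n <oo) (('X^n).[clamp01 x * (flipX b).[nested bs s]])%:E)%E).
have FG : {in `[0%R, 1%R[, F =1 G}.
  move=> x; rewrite in_itv /= => /andP[x0 x1]; congr cube_int; apply/funext => s.
  under [RHS]eq_eseriesr do rewrite hornerXn.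
  have /andP[g0 g1] := flipX_01 b (nested_01 bs s).
  rewrite eseries_geometric // mulr_ge0 ?clamp01_ge0 //= (le_lt_trans _ x1) //.
  by rewrite clamp01_id ?x0 ?(ltW x1) // ler_piMr.
have mG : measurable_fun (`[0%R, 1%R[ : set R) G.
  have mS : measurable_fun (`[0%R, 1%R[ : set R) (fun x =>
      \sum_(n <oo) (momf (mom bs) ('X^n \Po (clamp01 x *: flipX b)))%:E)%E.
    apply: ge0_emeasurable_sum => [n x _ _|n _].
      by rewrite lee_fin momf_mom_ge0 //; exact: comp_clamp01_flipX_ge0 (Xn_ge0 n).
    exact: measurable_momf_comp_clamp01.
  apply: (eq_measurable_fun _ _ mS) => x _.
  rewrite /G -cube_int_series_nested; last first.
    by move=> n; exact: comp_clamp01_flipX_ge0 (Xn_ge0 n).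
  by congr cube_int; apply/funext => s; apply: eq_eseriesr => n _;
    rewrite horner_comp hornerZ.
have mF : measurable_fun (`[0%R, 1%R[ : set R) F.
  by apply: (eq_measurable_fun _ _ mG) => x /[!inE] x01; rewrite FG ?inE.
rewrite -(integral_itv_bndo_bndc mF) -(integral_itv_bndo_bndc mG).
by apply: eq_integral => x /[!inE] x01; rewrite FG ?inE.
Qed.

End NestedProducts.

Section ZetaStar.
Variable R : realType.

Definition zeta_weight (ks n : seq nat) : R :=
  \prod_(j < size ks) ((nth 0%N n j)%:R ^+ nth 0%N ks j)^-1.

(* The sum defining zeta_star ks restricted to N >= n_1. *)
Fixpoint zeta_trunc (ks : seq nat) (N : nat) : R :=
  if ks is k :: ks' then \sum_(M < N) (M.+1%:R ^+ k)^-1 * zeta_trunc ks' M.+1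
  else 1.

Definition zs_below (ks : seq nat) (M : nat) : set (seq nat) :=
  [set n | zs_index (size ks) n /\ (nth 0%N n 0 <= M)%N].

Lemma zeta_weight_cons k ks m n :
  zeta_weight (k :: ks) (m :: n) = (m%:R ^+ k)^-1 * zeta_weight ks n.
Proof. by rewrite /zeta_weight big_ord_recl. Qed.

Lemma zeta_weight_ge0 ks n : 0 <= zeta_weight ks n.
Proof. by apply: prodr_ge0 => j _; rewrite invr_ge0 exprn_ge0. Qed.

Lemma zeta_trunc_ge0 ks N : 0 <= zeta_trunc ks N.
Proof.
elim: ks N => [|k ks IH] N /=; first exact: ler01.
by apply: sumr_ge0 => M _; rewrite mulr_ge0 ?invr_ge0 ?exprn_ge0.
Qed.

Lemma zs_index_consP k ks n :
  zs_index (size (k :: ks)) n <->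
  exists M n', n = M.+1 :: n' /\ zs_below ks M.+1 n'.
Proof.
split.
  case: n => [|m n'] [] //= [sz] [srt] /andP[m0 pos].
  exists m.-1, n'; rewrite prednK //; do !split => //.
    by case: n' srt {pos sz} => //= y p /andP[_ ->].
  by case: n' srt {pos sz} => //= y p /andP[].
case=> M [n' [-> [[sz [srt pos]] hd]]]; split; first by rewrite /= sz.
by split => //=; case: n' srt hd {pos sz} => //= y p -> ->.
Qed.

Lemma zs_below_consP k ks M n :
  zs_below (k :: ks) M n <->
  exists2 M', (M' < M)%N & exists n', n = M'.+1 :: n' /\ zs_below ks M'.+1 n'.
Proof.
split.
  by case=> /zs_index_consP [M' [n' [-> H]]] /= hM; exists M' => //; exists n'.
by case=> M' hM [n' [-> H]]; split => //; apply/zs_index_consP; exists M', n'.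
Qed.

Lemma esum_zs_below ks M (c : R) : 0 <= c ->
  \esum_(n in zs_below ks M) (c * zeta_weight ks n)%:E = (c * zeta_trunc ks M)%:E.
Proof.
elim: ks M c => [|k ks IH] M c c0.
  rewrite (_ : zs_below [::] M = [set [::]]).
    by rewrite esum_set1 /zeta_weight ?big_ord0 //= lee_fin mulr1.
  apply/seteqP; split => n /=; first by case=> [[]]; case: n.
  by move=> ->.
have -> : zs_below (k :: ks) M =
    \bigcup_(M' in [set j | (j < M)%N]) (cons M'.+1 @` zs_below ks M'.+1).
  apply/seteqP; split => n.
    by case/zs_below_consP => M' hM [n' [-> H]]; exists M' => //; exists n'.
  by case=> M' hM [n' H <-]; apply/zs_below_consP; exists M' => //; exists n'.
rewrite esum_bigcupT; first last.
- by move=> n; rewrite lee_fin mulr_ge0 ?zeta_weight_ge0.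
- by move=> i j _ _ [n /= [[n1 _ <-] [n2 _ []]]].
transitivity (\esum_(M' in [set j | (j < M)%N])
   (c * ((M'.+1%:R ^+ k)^-1 * zeta_trunc ks M'.+1))%:E).
  apply: eq_esum => M' _; rewrite esum_image; last by move=> x y _ _ [].
  under eq_esum do rewrite zeta_weight_cons mulrA.
  by rewrite IH ?mulrA // mulr_ge0 // invr_ge0 exprn_ge0.
rewrite esum_fset; first last.
- by move=> j _; rewrite lee_fin !mulr_ge0 ?invr_ge0 ?exprn_ge0 ?zeta_trunc_ge0.
- exact: finite_II.
by rewrite -fsbig_ord sumEFin /= mulr_sumr.
Qed.

Lemma zeta_star_cons k ks :
  zeta_star (k :: ks) =
  (\sum_(M <oo) ((M.+1%:R ^+ k)^-1 * zeta_trunc ks M.+1)%:E)%E.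
Proof.
rewrite /zeta_star -/(zeta_weight (k :: ks) _).
have -> : zs_index (size (k :: ks)) =
    \bigcup_(M in setT) (cons M.+1 @` zs_below ks M.+1).
  apply/seteqP; split => n.
    by case/zs_index_consP => M [n' [-> H]]; exists M => //; exists n'.
  by case=> M _ [n' H <-]; apply/zs_index_consP; exists M, n'.
rewrite esum_bigcupT; first last.
- by move=> n; rewrite lee_fin zeta_weight_ge0.
- by move=> i j _ _ [n /= [[n1 _ <-] [n2 _ []]]].
rewrite nneseries_esumT; last first.
  by move=> M; rewrite lee_fin mulr_ge0 ?invr_ge0 ?exprn_ge0 ?zeta_trunc_ge0.
apply: eq_esum => M _; rewrite esum_image; last by move=> x y _ _ [].
under eq_esum do rewrite -/(zeta_weight (k :: ks) _) zeta_weight_cons.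
by rewrite esum_zs_below // invr_ge0 exprn_ge0.
Qed.

End ZetaStar.

Section MomentRecursions.
Variable R : realType.
Local Notation mom := (@mom R).
Local Notation flipX := (@flipX R).

Definition comom (bs : seq bool) (n : nat) : R := momf (mom bs) ((1 - 'X) ^+ n).

Lemma momf_mom_cons b bs p :
  momf (mom (b :: bs)) p = momf (mom bs) (poly_avg p \Po flipX b).
Proof.
rewrite momf_comp (momf_wide _ (size_poly _ _)); apply: eq_bigr => j _.
by rewrite coef_poly ltn_ord mulrA mulrAC.
Qed.

Lemma comom_cons b bs n :
  comom (b :: bs) n =
  n.+1%:R^-1 * \sum_(m < n.+1) momf (mom bs) ((1 - flipX b) ^+ m).
Proof.
rewrite /comom momf_mom_cons poly_avg_1subX_pow comp_polyZ momfZ raddf_sum.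
rewrite momf_sum; congr (_ * _); apply: eq_bigr => m _.
by rewrite /= rmorphXn rmorphB rmorph1 /= comp_polyX.
Qed.

Lemma comom_nil n : comom [::] n = 1.
Proof. by rewrite /comom momf_mom_nil !hornerE subr0 expr1n. Qed.

Lemma comom_false bs n :
  comom (false :: bs) n = n.+1%:R^-1 * \sum_(m < n.+1) comom bs m.
Proof. by rewrite comom_cons. Qed.

Lemma comom_true bs n :
  comom (true :: bs) n = n.+1%:R^-1 * \sum_(m < n.+1) mom bs m.
Proof.
rewrite comom_cons; congr (_ * _); apply: eq_bigr => m _.
by rewrite /flipX opprB addrC subrK momfXn.
Qed.

Lemma mom_false bs n : mom (false :: bs) n = mom bs n / n.+1%:R.
Proof. by rewrite /= momfXn. Qed.

Lemma mom_block j bs n :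
  mom (nseq j false ++ true :: bs) n = comom bs n / n.+1%:R ^+ j.+1.
Proof.
elim: j => [|j IH]; first by rewrite expr1.
by rewrite [LHS]mom_false IH [in RHS]exprSr invfM mulrA.
Qed.

Lemma comom_block j bs ks :
  (forall N, \sum_(m < N.+1) mom bs m = zeta_trunc R ks N.+1) ->
  forall n, comom (nseq j false ++ true :: bs) n =
            n.+1%:R^-1 * zeta_trunc R (nseq j 1%N ++ ks) n.+1.
Proof.
move=> mom_bs; elim: j => [|j IH] n; first by rewrite comom_true mom_bs.
rewrite [LHS]comom_false; congr (_ * _); apply: eq_bigr => m _.
by rewrite IH expr1.
Qed.

End MomentRecursions.

(* [block_word [:: l_1; ...; l_r]] is false^(l_1-1) true ... false^(l_r-1) true, so
   that [nested] of it is x_1...x_(l_1) (1 - x_(l_1+1)...x_(l_1+l_2) (1 - ...)). *)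
Definition block_word (ls : seq nat) : seq bool :=
  flatten [seq nseq l.-1 false ++ [:: true] | l <- ls].

Fixpoint block_args (ls : seq nat) : seq nat :=
  if ls is [:: l, l' & ls'] then l.+1 :: nseq l'.-1 1%N ++ block_args ls' else ls.

Lemma block_args_cons2 l l' ls :
  block_args [:: l, l' & ls] = l.+1 :: nseq l'.-1 1%N ++ block_args ls.
Proof. by []. Qed.

Lemma block_word_cons l ls :
  block_word (l :: ls) = nseq l.-1 false ++ true :: block_word ls.
Proof. by rewrite /block_word /= -catA. Qed.

Lemma size_block_word ls :
  all (fun l => 0 < l)%N ls -> size (block_word ls) = sumn ls.
Proof.
elim: ls => [|l ls IH] //= /andP[l0 pos].
by rewrite block_word_cons size_cat size_nseq /= IH // -addSnnS prednK.
Qed.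

Section BlockMoments.
Variable R : realType.
Local Notation mom := (@mom R).
Local Notation zeta_trunc := (zeta_trunc R).

Lemma partial_sum_mom_block_word ls : all (fun l => 0 < l)%N ls ->
  forall N, \sum_(m < N.+1) mom (block_word ls) m = zeta_trunc (block_args ls) N.+1.
Proof.
pose P ls := all (fun l => 0 < l)%N ls ->
  forall N, \sum_(m < N.+1) mom (block_word ls) m = zeta_trunc (block_args ls) N.+1.
suff : P ls /\ forall l, P (l :: ls) by case.
elim: ls => [|l' ls [IHls IHcons]].
  split=> [_ N|l /andP[l0 _] N]; first by rewrite big_ord_recl big1 ?addr0.
  apply: eq_bigr => m _.
  by rewrite block_word_cons mom_block comom_nil prednK // mulr1 div1r.
split=> // l /andP[l0 /andP[l'0 pos]] N.
rewrite 2!block_word_cons /=; apply: eq_bigr => m _.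
rewrite mom_block (comom_block _ (IHls pos)) prednK //.
by rewrite exprS invfM mulrAC.
Qed.

Lemma eseries_mom_block_word ls : ls != [::] -> all (fun l => 0 < l)%N ls ->
  (\sum_(n <oo) (mom (block_word ls) n)%:E)%E = zeta_star (block_args ls).
Proof.
case: ls => [//|l ls] _ pos.
have [k [ks args]] : exists k ks, block_args (l :: ls) = k :: ks.
  by case: ls {pos} => [|l' ls]; do 2 eexists.
rewrite args zeta_star_cons; apply: eq_eseriesr => n _; congr EFin.
apply: (@eq_from_partial_sums _ _
  (fun M => (M.+1%:R ^+ k)^-1 * zeta_trunc ks M.+1)) => N.
by rewrite partial_sum_mom_block_word // args.
Qed.

End BlockMoments.

Section BlockProducts.
Variable R : realType.
Local Notation nested := (@nested R).
Local Notation clamp01 := (@clamp01 R).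

Lemma nested_block j bs (s : seq R) :
  nested (nseq j false ++ true :: bs) s =
  (\prod_(m < j.+1) clamp01 (nth 0 s m)) * (1 - nested bs (drop j.+1 s)).
Proof.
elim: j s => [|j IH] s /=; first by rewrite big_ord1 /flipX !hornerE drop1 nth0.
rewrite /flipX hornerX IH [in RHS]big_ord_recl /= mulrA -drop1 drop_drop addn1 nth0.
by congr (_ * _ * _); apply: eq_bigr => m _; rewrite nth_drop.
Qed.

Lemma nested_block_word ls (s : seq R) : all (fun l => 0 < l)%N ls ->
  nested (block_word ls) s =
  \sum_(j < size ls) (-1) ^+ j * \prod_(m < sumn (take j.+1 ls)) clamp01 (nth 0 s m).
Proof.
elim: ls s => [|l ls IH] s /=; first by rewrite big_ord0.
move=> /andP[l0 pos]; rewrite block_word_cons nested_block prednK // IH //.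
rewrite big_ord_recl /= expr0 mul1r take0 addn0 mulrBr mulr1; congr (_ + _).
rewrite mulr_sumr -sumrN; apply: eq_bigr => j _.
rewrite /bump /= exprS mulN1r mulNr mulrCA big_split_ord /= add1n.
by congr (- (_ * (_ * _))); apply: eq_bigr => m _; rewrite nth_drop.
Qed.

End BlockProducts.

Definition with0 (i : nat -> nat) (j : nat) : nat := if j is 0 then 0 else i j.

Definition gaps (i : nat -> nat) (r : nat) : seq nat :=
  [seq i j.+1 - with0 i j | j <- iota 0 r]%N.

Section Gaps.
Variables (i : nat -> nat) (r : nat).
Hypothesis i1_gt0 : (0 < i 1)%N.
Hypothesis i_incr : forall j, (1 <= j < r)%N -> (i j < i j.+1)%N.

Lemma with0_lt j : (j < r)%N -> (with0 i j < i j.+1)%N.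
Proof. by case: j => [|j] //= lt_j_r; apply: i_incr. Qed.

Lemma gaps_gt0 : all (fun l => 0 < l)%N (gaps i r).
Proof.
apply/allP => l /mapP [j]; rewrite mem_iota add0n => /andP[_ lt_j_r] ->.
by rewrite subn_gt0 with0_lt.
Qed.

Lemma sumn_take_gaps t : (t <= r)%N -> sumn (take t (gaps i r)) = with0 i t.
Proof.
rewrite /gaps -map_take take_iota.
elim: t => [|t IH] lt_t_r; first by rewrite min0n.
rewrite (minn_idPl lt_t_r) -addn1 iotaD map_cat sumn_cat /= add0n addn0.
rewrite (minn_idPl (ltnW lt_t_r)) in IH; rewrite IH ?(ltnW lt_t_r) //.
by have := with0_lt lt_t_r; rewrite addn1 /=; lia.
Qed.

Lemma size_block_word_gaps : (0 < r)%N -> size (block_word (gaps i r)) = i r.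
Proof.
move=> r_gt0; rewrite size_block_word ?gaps_gt0 //.
rewrite -(@take_oversize _ r (gaps i r)) ?size_map ?size_iota // sumn_take_gaps //.
by move: r_gt0; case: (r).
Qed.

Lemma denom_nested {R : realType} (s : seq R) : all (fun x => 0 <= x <= 1) s ->
  denom i r s = 1 - nested (block_word (gaps i r)) s.
Proof.
move=> /allP s01; rewrite nested_block_word ?gaps_gt0 // size_map size_iota.
rewrite /denom big_add1 /= big_mkord -sumrN; congr (1 + _); apply: eq_bigr => j _.
rewrite sumn_take_gaps // exprS mulN1r mulNr; congr (- (_ * _)).
apply: eq_bigr => m _; rewrite clamp01_id //.
case: (ltnP m (size s)) => [lt_m_s|le_s_m]; first exact/s01/mem_nth.
by rewrite nth_default ?lexx ?ler01.
Qed.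

End Gaps.

Definition zblock (i : nat -> nat) (j : nat) : seq nat :=
  ((i (2 * j - 1) - (if j == 1 then 0 else i (2 * j - 2))).+1
     :: nseq (i (2 * j) - i (2 * j - 1) - 1) 1)%N.

Lemma zblockS (i : nat -> nat) a :
  zblock i a.+1 = ((i (2 * a).+1 - with0 i (2 * a)).+1
                   :: nseq (i (2 * a).+2 - with0 i (2 * a).+1).-1 1)%N.
Proof.
rewrite /zblock (_ : 2 * a.+1 - 1 = (2 * a).+1)%N; last by lia.
rewrite (_ : 2 * a.+1 - 2 = 2 * a)%N; last by lia.
rewrite (_ : 2 * a.+1 = (2 * a).+2)%N /= ?subn1; last by lia.
by case: a.
Qed.

Lemma iota_2mul m n :
  iota (2 * m) n.+2 = [:: 2 * m, (2 * m).+1 & iota (2 * m.+1) n]%N.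
Proof. by rewrite mulnS add2n. Qed.

Lemma block_args_gaps_even (i : nat -> nat) a k :
  block_args [seq i j.+1 - with0 i j | j <- iota (2 * a) (2 * k)]%N =
  flatten [seq zblock i j | j <- iota a.+1 k].
Proof.
elim: k a => [|k IH] a; first by rewrite muln0.
rewrite mulnS add2n iota_2mul [iota a.+1 _]/= !map_cons block_args_cons2.
by rewrite IH zblockS.
Qed.

Lemma block_args_gaps_odd (i : nat -> nat) a k :
  block_args [seq i j.+1 - with0 i j | j <- iota (2 * a) (2 * k).+1]%N =
  flatten [seq zblock i j | j <- iota a.+1 k] ++
    [:: i (2 * (a + k)).+1 - with0 i (2 * (a + k))]%N.
Proof.
elim: k a => [|k IH] a; first by rewrite muln0 addn0.
rewrite mulnS add2n iota_2mul [iota a.+1 _]/= !map_cons block_args_cons2 IH.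
by rewrite zblockS addSnnS /= catA.
Qed.

Lemma block_args_gaps_zblocks_even (i : nat -> nat) k :
  block_args (gaps i (2 * k)) = zblocks i k.
Proof. by rewrite /gaps -(muln0 2) block_args_gaps_even. Qed.

Lemma block_args_gaps_zblocks_odd (i : nat -> nat) k : (0 < k)%N ->
  block_args (gaps i (2 * k + 1)) =
  zblocks i k ++ [:: i (2 * k + 1) - i (2 * k)]%N.
Proof.
move=> k_gt0; rewrite /gaps addn1 -{1}(muln0 2) block_args_gaps_odd add0n.
by case: k k_gt0.
Qed.

Lemma cube_int_inv_denom (R : realType) (i : nat -> nat) r : (0 < r)%N ->
  (0 < i 1)%N -> (forall j, (1 <= j < r)%N -> (i j < i j.+1)%N) ->
  cube_int (i r) (fun x => ((denom i r x)^-1)%:E) =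
  zeta_star (R := R) (block_args (gaps i r)).
Proof.
move=> r_gt0 i1_gt0 i_incr.
have ir_gt0 : (0 < i r)%N.
  case: r r_gt0 i_incr => // r' _ i_incr.
  by have := with0_lt i1_gt0 i_incr (ltnSn r'); lia.
rewrite -(size_block_word_gaps i1_gt0 i_incr r_gt0) in ir_gt0 *.
rewrite (@eq_cube_int _ _ _
  (fun s => ((1 - nested (block_word (gaps i r)) s)^-1)%:E)); last first.
  by move=> s _ s01; rewrite (denom_nested i1_gt0 i_incr).
case word: (block_word (gaps i r)) ir_gt0 => [//|b bs] _.
rewrite cube_int_inv_1sub_nested -word eseries_mom_block_word ?gaps_gt0 //.
by case: r r_gt0 {i_incr word}.
Qed.

Unset Implicit Arguments. Set Strict Implicit.
Local Close Scope classical_set_scope.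

Theorem theorem1p1 (R : realType) (k : nat) (hk : (1 <= k)%N) (i : nat -> nat) :
  (* (i) r = 2k+1 *)
  ((1 <= i 1)%N -> (forall j, (1 <= j < 2 * k + 1)%N -> (i j < i j.+1)%N) ->
    cube_int (i (2 * k + 1)%N)
      (fun x => ((denom i (2 * k + 1) x)^-1)%:E)
    = zeta_star (R := R) (zblocks i k ++ [:: (i (2 * k + 1) - i (2 * k))%N]))
  /\
  (* (ii) r = 2k *)
  ((1 <= i 1)%N -> (forall j, (1 <= j < 2 * k)%N -> (i j < i j.+1)%N) ->
    cube_int (i (2 * k)%N)
      (fun x => ((denom i (2 * k) x)^-1)%:E)
    = zeta_star (R := R) (zblocks i k)).
Proof.
split => i1_gt0 i_incr.
  rewrite -block_args_gaps_zblocks_odd //.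
  by apply: cube_int_inv_denom => //; rewrite addn1.
rewrite -block_args_gaps_zblocks_even.
by apply: cube_int_inv_denom => //; rewrite muln_gt0.
Qed.
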